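(* Let $G$ be a finite simple connected graph other than $K_2$, let $L$ be a subset of its leaves and let $L^c$ be the set of remaining leaves of $G$. Then \[ \rho\circ\lambda(G)=\rho\circ\lambda_L\circ\rho\circ\lambda_{L^c}(G). \]
   Context: A leaf is a vertex of degree one; two distinct vertices are siblings if they have the same closed neighborhood $N[v]=\{v\}\cup N(v)$. For a graph $G$ other than $K_2$ and a set $S$ of leaves of $G$, $\lambda_S(G)$ is the graph obtained by removing the vertices in $S$; $\lambda(G)$ is the graph obtained by removing all leaves of $G$. $\rho(G)$ is obtained from $G$ by contracting each maximal group of siblings to a single vertex. Equalities of graphs are understood up to the natural identification of vertices (i.e. as isomorphic graphs). *)

From mathcomp Require Import all_boot.

(* A (finite) graph: a finite vertex type with an adjacency relation.
   Simplicity (symmetric, irreflexive) is imposed as a hypothesis. *)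
Record graph : Type := Graph { gvert : finType; gadj : rel gvert }.

Set Implicit Arguments. Unset Strict Implicit. Unset Printing Implicit Defensive.

Definition simple_graph (G : graph) : Prop :=
  symmetric (gadj G) /\ irreflexive (gadj G).

Definition connected_graph (G : graph) : Prop :=
  0 < #|gvert G| /\ forall x y : gvert G, connect (gadj G) x y.

Definition is_K2 (G : graph) : Prop :=
  #|gvert G| = 2 /\ forall x y : gvert G, x != y -> gadj G x y.

Definition nbhd (G : graph) (v : gvert G) : {set gvert G} :=
  [set u | gadj G v u].

Definition cnbhd (G : graph) (v : gvert G) : {set gvert G} := v |: nbhd v.

Definition is_leaf (G : graph) (v : gvert G) : bool := #|nbhd v| == 1.

Definition leaves (G : graph) : {set gvert G} := [set v | is_leaf v].

Definition siblings (G : graph) (u v : gvert G) : bool :=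
  (u != v) && (cnbhd u == cnbhd v).

Definition induced (G : graph) (A : {set gvert G}) : graph :=
  @Graph {x : gvert G | x \in A} (fun x y => gadj G (val x) (val y)).

Definition lambdaS (G : graph) (S : {set gvert G}) : graph := induced (~: S).

Definition lambda (G : graph) : graph := lambdaS (leaves G).

Definition sib_class (G : graph) (v : gvert G) : {set gvert G} :=
  [set u | (u == v) || siblings u v].

Definition sib_classes (G : graph) : {set {set gvert G}} :=
  [set sib_class v | v : gvert G].

(* rho(G): contract each maximal group of siblings to a single vertex;
   vertices are the sibling classes, two distinct classes are adjacent
   iff some members are adjacent. *)
Definition rho (G : graph) : graph :=
  @Graph {C : {set gvert G} | C \in sib_classes G}
    (fun C D => (val C != val D) &&
       [exists x in val C, exists y in val D, gadj G x y]).

Definition graph_iso (G H : graph) : Prop :=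
  exists f : gvert G -> gvert H,
    bijective f /\ forall x y, gadj H (f x) (f y) = gadj G x y.

(* Vertices of rho(lambda_{L^c}(G)) that represent only vertices of L
   (the natural identification of L with a vertex set of that graph). *)
Definition L_in_rho_lambda (G : graph) (Lc L : {set gvert G})
  : {set gvert (rho (lambdaS Lc))} :=
  [set C : gvert (rho (lambdaS Lc)) |
     [forall x : gvert (lambdaS Lc), (x \in (val C : {set gvert (lambdaS Lc)})) ==> (val x \in L)]].

From mathcomp Require Import all_boot.

Set Implicit Arguments.
Unset Strict Implicit.
Unset Printing Implicit Defensive.

(* Let H = lambda_{L^c}(G). Sending a non-leaf v of G to its sibling class in
   H is a surjection from lambda(G) onto lambda_L(rho(H)): a class survives
   lambda_L exactly when it contains a vertex outside L, i.e. a non-leaf of G.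
   Two non-leaves with the same image are siblings in H, hence in the induced
   subgraph lambda(G), and vertices with distinct images are adjacent iff their
   images are. Any surjection with these two properties induces an isomorphism
   between the sibling quotients rho. *)

Lemma in_cnbhd (X : graph) (a z : gvert X) :
  (z \in cnbhd a) = (z == a) || gadj X a z.
Proof. by rewrite !inE. Qed.

Lemma cnbhd_refl (X : graph) (a : gvert X) : a \in cnbhd a.
Proof. by rewrite in_cnbhd eqxx. Qed.

Lemma in_sib_class (X : graph) (u v : gvert X) :
  (u \in sib_class v) = (cnbhd u == cnbhd v).
Proof. by rewrite inE /siblings; case: eqVneq => [->|]; rewrite ?eqxx. Qed.

Lemma eq_sib_class (X : graph) (u v : gvert X) :
  (sib_class u == sib_class v) = (cnbhd u == cnbhd v).
Proof.
apply/eqP/eqP => e; last by apply/setP => w; rewrite !in_sib_class e.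
by apply/eqP; rewrite -in_sib_class -e in_sib_class.
Qed.

Lemma mem_sib_classes (X : graph) (v : gvert X) : sib_class v \in sib_classes X.
Proof. by apply/imsetP; exists v. Qed.

Lemma inj_onto_bij (T : choiceType) (T' : eqType) (f : T -> T') :
  injective f -> (forall y, exists x, f x = y) -> bijective f.
Proof.
move=> f_inj f_onto.
have f_onto' y : exists x, f x == y by have [x <-] := f_onto y; exists x.
pose g y := xchoose (f_onto' y).
have gK : cancel g f by move=> y; apply/eqP/(xchooseP (f_onto' y)).
by exists g => // x; apply: f_inj; rewrite gK.
Qed.

Section SiblingClasses.

Variable X : graph.

Definition cls (v : gvert X) : gvert (rho X) :=
  exist _ (sib_class v) (mem_sib_classes v).

Lemma eq_cls (u v : gvert X) : (cls u == cls v) = (cnbhd u == cnbhd v).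
Proof. exact: eq_sib_class. Qed.

Lemma cls_onto (C : gvert (rho X)) : exists v, cls v == C.
Proof.
case: C => C CP; have /imsetP [v _ eC] := CP.
by exists v; apply/eqP/val_inj; rewrite /= eC.
Qed.

Definition cls_repr (C : gvert (rho X)) : gvert X := xchoose (cls_onto C).

Lemma cls_reprK : cancel cls_repr cls.
Proof. by move=> C; apply/eqP/(xchooseP (cls_onto C)). Qed.

Lemma cls_of_mem (C : gvert (rho X)) (v : gvert X) : v \in val C -> cls v = C.
Proof.
have [w /eqP <-] := cls_onto C; rewrite /= in_sib_class => e.
by apply/eqP; rewrite eq_cls.
Qed.

Lemma adj_cls (u v : gvert X) : symmetric (gadj X) ->
  gadj (rho X) (cls u) (cls v) = (cnbhd u != cnbhd v) && gadj X u v.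
Proof.
move=> symX; rewrite /= eq_sib_class; case: eqVneq => //= ne.
apply/idP/idP => [|uv]; last first.
  apply/exists_inP; exists u; rewrite ?in_sib_class //.
  by apply/exists_inP; exists v; rewrite ?in_sib_class.
case/exists_inP => x; rewrite in_sib_class => /eqP xu /exists_inP [y].
rewrite in_sib_class => /eqP yv xy.
have: y \in cnbhd u by rewrite -xu in_cnbhd xy orbT.
rewrite in_cnbhd => /orP [/eqP yu | uy]; first by move: ne; rewrite -yv yu eqxx.
have: u \in cnbhd v by rewrite -yv in_cnbhd symX uy orbT.
rewrite in_cnbhd => /orP [/eqP uv | vu]; last by rewrite symX.
by move: ne; rewrite uv eqxx.
Qed.

End SiblingClasses.

Section RhoIso.

Variables (X Y : graph) (f : gvert X -> gvert Y).
Hypothesis symX : symmetric (gadj X).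
Hypothesis f_onto : forall y, exists x, f x = y.
Hypothesis f_fibre : forall a b, f a = f b -> cnbhd a = cnbhd b.
Hypothesis f_adj : forall a b, f a != f b -> gadj Y (f a) (f b) = gadj X a b.

Lemma mem_cnbhd_map (a z : gvert X) : (f z \in cnbhd (f a)) = (z \in cnbhd a).
Proof.
rewrite !in_cnbhd; case: (eqVneq (f z) (f a)) => [/f_fibre e | ne] /=.
  by rewrite -in_cnbhd -e cnbhd_refl.
have -> : (z == a) = false by apply: contraNF ne => /eqP ->.
by rewrite f_adj // eq_sym.
Qed.

Lemma eq_cnbhd_map (a b : gvert X) :
  (cnbhd (f a) == cnbhd (f b)) = (cnbhd a == cnbhd b).
Proof.
apply/eqP/eqP => e; apply/setP => z; last first.
  by have [x <-] := f_onto z; rewrite !mem_cnbhd_map e.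
by rewrite -!mem_cnbhd_map e.
Qed.

Lemma symmetric_map : symmetric (gadj Y).
Proof.
move=> y1 y2; have [a <-] := f_onto y1; have [b <-] := f_onto y2.
case: (eqVneq (f a) (f b)) => [-> // | ne].
by rewrite f_adj // f_adj; [apply: symX | rewrite eq_sym].
Qed.

Lemma rho_iso_map : graph_iso (rho X) (rho Y).
Proof.
pose g C := cls (f (cls_repr C)).
have g_cls a : g (cls a) = cls (f a).
  by apply/eqP; rewrite eq_cls eq_cnbhd_map -eq_cls cls_reprK.
exists g; split.
  apply: inj_onto_bij => [C D | D].
    have [a /eqP <-] := cls_onto C; have [b /eqP <-] := cls_onto D.
    by rewrite !g_cls => /eqP; rewrite !eq_cls eq_cnbhd_map -eq_cls => /eqP.
  have [y /eqP <-] := cls_onto D; have [x <-] := f_onto y.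
  by exists (cls x); rewrite g_cls.
move=> C D; have [a /eqP <-] := cls_onto C; have [b /eqP <-] := cls_onto D.
rewrite !g_cls !adj_cls //; last exact: symmetric_map.
rewrite eq_cnbhd_map; case: eqP => //= ne.
by apply: f_adj; apply: contra_not_neq ne => /f_fibre.
Qed.

End RhoIso.

Section InducedWiden.

Variables (G : graph) (A B : {set gvert G}).
Hypothesis sAB : A \subset B.

Definition widen_induced (x : gvert (induced A)) : gvert (induced B) :=
  exist _ (val x) (subsetP sAB _ (valP x)).

Lemma widen_induced_inj : injective widen_induced.
Proof. by move=> x y /(congr1 val) e; apply: val_inj. Qed.

Lemma widen_induced_onto (y : gvert (induced B)) :
  val y \in A -> exists x, widen_induced x = y.
Proof. by move=> yA; exists (exist _ (val y) yA); apply: val_inj. Qed.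

Lemma mem_cnbhd_widen (a z : gvert (induced A)) :
  (widen_induced z \in cnbhd (widen_induced a)) = (z \in cnbhd a).
Proof. by rewrite !in_cnbhd (inj_eq widen_induced_inj). Qed.

Lemma cnbhd_widen_inj (a b : gvert (induced A)) :
  cnbhd (widen_induced a) = cnbhd (widen_induced b) -> cnbhd a = cnbhd b.
Proof. by move=> e; apply/setP => z; rewrite -!mem_cnbhd_widen e. Qed.

End InducedWiden.

Section PartialLeafRemoval.

Variables (G : graph) (L : {set gvert G}).
Hypothesis symG : symmetric (gadj G).
Hypothesis sLleaves : L \subset leaves G.

Local Notation Lc := (leaves G :\: L).
Local Notation H := (lambdaS Lc).
Local Notation LH := (L_in_rho_lambda Lc L).

Lemma nonleaves_subset : ~: leaves G \subset ~: Lc.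
Proof. by rewrite setCS subsetDl. Qed.

Definition lift_nonleaf : gvert (lambda G) -> gvert H :=
  widen_induced nonleaves_subset.

Lemma cls_lift_nonleaf_notin (a : gvert (lambda G)) :
  cls (lift_nonleaf a) \in ~: LH.
Proof.
rewrite !inE negb_forall; apply/existsP; exists (lift_nonleaf a).
rewrite negb_imply [_ \in _]in_sib_class eqxx /=.
by have := valP a; rewrite inE; apply: contra => /(subsetP sLleaves).
Qed.

Definition quot_nonleaf (a : gvert (lambda G)) : gvert (lambdaS LH) :=
  exist _ (cls (lift_nonleaf a)) (cls_lift_nonleaf_notin a).

Lemma quot_nonleaf_onto C : exists a, quot_nonleaf a = C.
Proof.
case: C => C CP; have := CP; rewrite !inE negb_forall => /existsP [x].
rewrite negb_imply => /andP [xC xL].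
have: val x \in ~: leaves G by move: (valP x); rewrite !inE (negbTE xL).
case/(widen_induced_onto nonleaves_subset) => a ax.
by exists a; apply: val_inj; rewrite /= -(cls_of_mem xC) -ax.
Qed.

Lemma quot_nonleaf_fibre a b :
  quot_nonleaf a = quot_nonleaf b -> cnbhd a = cnbhd b.
Proof.
move=> /(congr1 val) /eqP; rewrite eq_cls => /eqP.
exact: cnbhd_widen_inj.
Qed.

Lemma quot_nonleaf_adj a b : quot_nonleaf a != quot_nonleaf b ->
  gadj (lambdaS LH) (quot_nonleaf a) (quot_nonleaf b) = gadj (lambda G) a b.
Proof.
move=> ne; have {ne} : cls (lift_nonleaf a) != cls (lift_nonleaf b) by [].
rewrite eq_cls => ne.
by rewrite [LHS](adj_cls (lift_nonleaf a)) ?ne // => x y; apply: symG.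
Qed.

End PartialLeafRemoval.

Theorem lemma5p2 (G : graph) (L : {set gvert G}) :
  simple_graph G -> connected_graph G -> ~ is_K2 G ->
  L \subset leaves G ->
  graph_iso (rho (lambda G))
    (rho (lambdaS (L_in_rho_lambda (leaves G :\: L) L))).
Proof.
(* Connectedness and G <> K_2 only ensure, in the paper, that L is still a set
   of leaves of rho(lambda_{L^c}(G)); lambdaS removes arbitrary vertex sets. *)
move=> [symG _] _ _ sLleaves.
apply: (@rho_iso_map _ _ (quot_nonleaf sLleaves)).
- by move=> x y; apply: symG.
- exact: quot_nonleaf_onto.
- exact: quot_nonleaf_fibre.
- exact: quot_nonleaf_adj.
Qed.
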